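(* Let $\ell\ge 1$ be an integer and let $P$ be a set of $n_\ell$ points. There exists a set system $\mathcal{Q}\subseteq 2^P$ such that: (1) $\mathcal{Q}$ consists of exactly $\lceil n_{\ell-1}/2\rceil+1$ sets, each of size $n_{\ell-1}$; (2) for every $p\in P$ there is a set in $\mathcal{Q}$ not containing $p$; (3) for every $p\in P$ there is a $q\in P$ such that every set in $\mathcal{Q}$ contains at least one of $p$ and $q$.
   Context: The sequence $n_0,n_1,\ldots$ is defined by $n_0=1$ and, for $i>0$, $n_i=\left(\lceil n_{i-1}/2\rceil+1\right)\cdot\left(\lfloor n_{i-1}/2\rfloor+1\right)$. *)

From mathcomp Require Import all_boot.
Set Implicit Arguments. Unset Strict Implicit. Unset Printing Implicit Defensive.

(* n_0 = 1, n_i = (ceil(n_{i-1}/2) + 1) * (floor(n_{i-1}/2) + 1).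
   In ssrnat: uphalf m = ceil(m/2), m./2 = floor(m/2). *)
Fixpoint nseq_n (i : nat) : nat :=
  match i with
  | 0 => 1
  | i'.+1 => ((uphalf (nseq_n i')).+1 * ((nseq_n i')./2).+1)%N
  end.

From mathcomp Require Import all_boot.
Set Implicit Arguments. Unset Strict Implicit. Unset Printing Implicit Defensive.

(* Write n_{l-1} = a + b with a = ceil(n_{l-1}/2) >= 1 and
   b = floor(n_{l-1}/2), so that n_l = (a+1)(b+1): the point set P is in
   bijection with the grid {0..a} x {0..b}.  For each column index j the set
     L_j = {(i,0) | i <> j}  u  {(j,k) | k <> 0}
   (the bottom row without (j,0), plus the column above it) has a + b points.
   The a+1 sets L_j are pairwise distinct; no grid point lies in all of them;
   and (i,k) is paired with (i,0) when k <> 0, with (j,0) for some j <> i when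
   k = 0, so that every L_j meets each such pair. *)

Definition pair_blocking (T : finType) (P : {set T}) (k m : nat)
    (Q : {set {set T}}) : Prop :=
  [/\ (forall S, S \in Q -> S \subset P),
      #|Q| = k,
      (forall S, S \in Q -> #|S| = m),
      (forall p, p \in P -> exists2 S, S \in Q & p \notin S)
    & (forall p, p \in P -> exists2 q, q \in P &
         forall S, S \in Q -> (p \in S) || (q \in S))].

Lemma injection_onto (X T : finType) (P : {set T}) :
  #|P| = #|X| -> exists2 f : X -> T, injective f & f @: setT = P.
Proof.
move=> cardP.
pose f (x : X) : T := enum_val (cast_ord (esym cardP) (enum_rank x)).
have f_inj : injective f by move=> x y /enum_val_inj/cast_ord_inj/enum_rank_inj.
exists f => //; apply/eqP; rewrite eqEcard card_imset // cardsT cardP leqnn andbT.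
by apply/subsetP=> _ /imsetP[x _ ->]; apply: enum_valP.
Qed.

Lemma pair_blocking_transport (X T : finType) (P : {set T}) k m
    (Q0 : {set {set X}}) :
  pair_blocking [set: X] k m Q0 -> #|P| = #|X| ->
  exists Q : {set {set T}}, pair_blocking P k m Q.
Proof.
case=> _ cardQ0 cardS0 avoid0 partner0 /injection_onto[f f_inj imf].
have memf (S : {set X}) x : (f x \in f @: S) = (x \in S) by apply: mem_imset.
exists ((fun S : {set X} => f @: S) @: Q0); split.
- by move=> _ /imsetP[S _ ->]; rewrite -imf imsetS ?subsetT.
- by rewrite card_imset //; apply: imset_inj.
- by move=> _ /imsetP[S /cardS0 <- ->]; rewrite card_imset.
- move=> p; rewrite -imf => /imsetP[x _ ->].
  have [S QS xS] := avoid0 x (in_setT x).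
  by exists (f @: S); rewrite ?memf // imset_f.
- move=> p; rewrite -imf => /imsetP[x _ ->].
  have [y _ hit] := partner0 x (in_setT x).
  exists (f y); first by rewrite imset_f.
  by move=> _ /imsetP[S QS ->]; rewrite !memf hit.
Qed.

Lemma exists_other (X : finType) (i : X) : 1 < #|X| -> exists j, j != i.
Proof.
case/card_gt1P=> [x [y [_ _ xy]]].
by case: (eqVneq x i) => [<-|]; [exists y; rewrite eq_sym | exists x].
Qed.

Section Grid.

Variables a b : nat.

(* Grid points are pairs (column, height). *)
Definition grid := ('I_a.+1 * 'I_b.+1)%type.

Definition hook (j : 'I_a.+1) : {set grid} :=
  setX [set~ j] [set ord0] :|: setX [set j] [set~ ord0].

Lemma mem_hook j (x : grid) :
  (x \in hook j) = if x.2 == ord0 then x.1 != j else x.1 == j.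
Proof.
by case: x => i k; rewrite !inE /=; case: (k == ord0); rewrite ?andbT ?andbF ?orbF.
Qed.

(* A hook is the disjoint union of an a-point row and a b-point column. *)
Lemma card_hook j : #|hook j| = a + b.
Proof.
have disjoint : setX [set~ j] [set ord0] :&: setX [set j] [set~ (ord0 : 'I_b.+1)]
                = set0.
  by apply/setP=> -[i k]; rewrite !inE /=; case: (k == ord0); rewrite ?andbF.
by rewrite cardsU disjoint cards0 subn0 !cardsX !cardsC1 !cards1 !card_ord muln1 mul1n.
Qed.

(* Distinct columns give distinct hooks: (j2,0) lies in hook j1 iff j1 <> j2. *)
Lemma hook_inj : injective hook.
Proof.
move=> j1 j2 eq_hook; apply/eqP; apply: contraT => j12.
have := mem_hook j1 (j2, ord0); rewrite eq_hook mem_hook /= eqxx.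
by rewrite eq_sym j12.
Qed.

Lemma hooks_pair_blocking :
  1 <= a -> pair_blocking [set: grid] a.+1 (a + b) (hook @: setT).
Proof.
move=> a_gt0.
have other i : exists j : 'I_a.+1, j != i by apply: exists_other; rewrite card_ord.
split.
- by move=> *; apply: subsetT.
- by rewrite card_imset ?cardsT ?card_ord //; apply: hook_inj.
- by move=> _ /imsetP[j _ ->]; apply: card_hook.
- move=> [i k] _; case: (eqVneq k ord0) => [->|k0].
    by exists (hook i); rewrite ?imset_f // mem_hook /= eqxx.
  have [j ji] := other i.
  by exists (hook j); rewrite ?imset_f // mem_hook /= (negbTE k0) eq_sym.
- move=> [i k] _; case: (eqVneq k ord0) => [->|k0].
    have [j ji] := other i.
    exists (j, ord0) => // _ /imsetP[j' _ ->]; rewrite !mem_hook /=.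
    by case: (eqVneq i j') => // <-.
  exists (i, ord0) => // _ /imsetP[j' _ ->].
  by rewrite !mem_hook /= (negbTE k0) orbN.
Qed.

End Grid.

Lemma uphalf_add_half n : uphalf n + n./2 = n.
Proof. by rewrite uphalf_half -addnA addnn odd_double_half. Qed.

Lemma nseq_n_gt0 i : 0 < nseq_n i.
Proof. by case: i. Qed.

Theorem lemma3 (l : nat) (T : finType) (P : {set T}) :
  1 <= l -> #|P| = nseq_n l ->
  exists Q : {set {set T}},
    [/\ (forall S, S \in Q -> S \subset P),
        #|Q| = (uphalf (nseq_n l.-1)).+1,
        (forall S, S \in Q -> #|S| = nseq_n l.-1),
        (forall p, p \in P -> exists2 S, S \in Q & p \notin S)
      & (forall p, p \in P -> exists2 q, q \in P &
           forall S, S \in Q -> (p \in S) || (q \in S))].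
Proof.
case: l => [//|l] _ /= cardP.
set n := nseq_n l.
have a_gt0 : 1 <= uphalf n by rewrite uphalf_gt0 nseq_n_gt0.
have := hooks_pair_blocking (n./2) a_gt0; rewrite uphalf_add_half => grid_family.
apply: pair_blocking_transport grid_family _.
by rewrite cardP card_prod !card_ord.
Qed.
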